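(* Let $n$ be a positive integer and let $a,b,c,\alpha$ be positive integers such that ${\alpha+n\choose n}+a=b+c$ and $a,b,c<{\alpha+n\choose n}$. Then \[{\alpha+n\choose n}^{<n>}+a^{<n>}\leq b^{<n>}+c^{<n>}.\] Moreover, if ${\alpha+n\choose n}^{<n>}+a^{<n>}=b^{<n>}+c^{<n>}$, then \[\Big\{{\alpha+n\choose n}^{<n>}\Big\}^{<n>}+\{a^{<n>}\}^{<n>}=\{b^{<n>}\}^{<n>}+\{c^{<n>}\}^{<n>}.\]
   Context: For positive integers $n,h$, $h$ can be written uniquely in the form ($n$th binomial representation) $h={h(n)+n\choose n}+{h(n-1)+n-1\choose n-1}+\dots+{h(i)+i\choose i}$ with $h(n)\geq h(n-1)\geq\dots\geq h(i)\geq 0$ and $i\geq 1$. Using this representation define $h^{<n>}={h(n)+n+1\choose n}+\dots+{h(i)+i+1\choose i}$. Iterates such as $\{h^{<n>}\}^{<n>}$ mean applying this operation (with the $n$th binomial representation of $h^{<n>}$) again. *)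

From mathcomp Require Import all_boot.
Set Implicit Arguments. Unset Strict Implicit. Unset Printing Implicit Defensive.

(* n-th binomial (Macaulay) representation of h, computed greedily.
   binrep n h = [:: (n, h(n)); (n-1, h(n-1)); ...; (i, h(i))]
   where h = \sum_(j,hj) 'C(hj + j, j), h(n) >= ... >= h(i) >= 0, i >= 1.
   At level j we take the largest m = h(j) + j with 'C(m, j) <= h
   (m ranges below h + j + 1, since 'C(h + j, j) > h for j >= 1),
   and continue with the remainder at level j - 1, stopping at 0.
   This greedy choice yields exactly the unique representation of the paper. *)
Fixpoint binrep (j h : nat) {struct j} : seq (nat * nat) :=
  match j with
  | 0 => [::]
  | j'.+1 =>
      if h == 0 then [::] else
      let m := \max_(m < h + j'.+2 | 'C(m, j'.+1) <= h) (m : nat) in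
      (j'.+1, m - j'.+1) :: binrep j' (h - 'C(m, j'.+1))
  end.

Definition mac_up (n h : nat) : nat :=
  \sum_(p <- binrep n h) 'C(p.2 + p.1 + 1, p.1).

From mathcomp Require Import all_boot zify.
Set Implicit Arguments. Unset Strict Implicit. Unset Printing Implicit Defensive.

(* Iterating Pascal's rule gives
     'C(m + 1, j) = 'C(m, j) + \sum_(1 <= s <= j) 'C(m - s, j - s),
     'C(m + 2, j) = 'C(m + 1, j) + \sum_(1 <= s <= j) s * 'C(m - s, j - s),
   so with the layers L_s(h) := \sum_(j >= s) 'C(h(j) + j - s, j - s) of the
   binomial representation ([mac_layer n s h]) we get h^<n> = h + \sum_s L_s(h)
   and (h^<n>)^<n> = h^<n> + \sum_s s * L_s(h).  Both claims then follow from
   the layerwise inequality L_s(N) + L_s(a) <= L_s(b) + L_s(c), N = 'C(alpha + n, n):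
   summing gives the first, and equality of the sums forces equality in every
   layer, which survives the weights s.  The layerwise inequality is proved by
   induction on n: on each block of numbers sharing the top binomial term
   (between consecutive [tier]s) the layer at level n + 1 is a translate of the
   layer at level n, and monotonicity, subadditivity and the exchange inequality
   [outer_le_inner] pass from the blocks to the glued function. *)

Lemma ltn_bin_addr m j : 0 < j -> m < 'C(m + j, j).
Proof.
case: j => // j _; elim: m => [|m IH]; first by rewrite add0n binn.
rewrite addSn binS; have : 0 < 'C(m + j.+1, j) by rewrite bin_gt0; lia.
lia.
Qed.

Lemma bin_split n h : 0 < n -> 0 < h ->
  exists M r, [/\ n <= M, r < 'C(M, n.-1) & h = 'C(M, n) + r].
Proof.
case: n => // n _; elim: h => // h IH _.
have [->|/IH [M [r [leM /= ltr ->]]]] := posnP h.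
  by exists n.+1, 0; rewrite binn bin_gt0.
case: (ltnP r.+1 'C(M, n)) => [ltr1|ger1].
  by exists M, r.+1; rewrite addnS.
by exists M.+1, 0; rewrite bin_gt0 binS addn0; split; lia.
Qed.

Lemma bigmax_bin_le j h M : 0 < j -> 'C(M, j) <= h < 'C(M.+1, j) ->
  \max_(m < h + j.+1 | 'C(m, j) <= h) (m : nat) = M.
Proof.
move=> j0 /andP [leCh ltCh].
have ltM : M < h + j.+1.
  rewrite ltnNge; apply/negP => leM.
  have : 'C(h.+1 + j, j) <= 'C(M, j) by apply: leq_bin2l; lia.
  have := ltn_bin_addr h.+1 j0; lia.
apply/eqP; rewrite eqn_leq; apply/andP; split.
  apply/bigmax_leqP => i leCi; rewrite leqNgt; apply/negP => ltMi.
  have := leq_bin2l j ltMi; lia.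
exact: (@leq_bigmax_cond _ _ (fun m : 'I_(h + j.+1) => (m : nat)) (Ordinal ltM)).
Qed.

Lemma binrep0 n : binrep n 0 = [::].
Proof. by case: n. Qed.

Lemma binrep_split n M r : 0 < n -> n <= M -> r < 'C(M, n.-1) ->
  binrep n ('C(M, n) + r) = (n, M - n) :: binrep n.-1 r.
Proof.
case: n => // n _ leM /= ltr.
have C_gt0 : 0 < 'C(M, n.+1) by rewrite bin_gt0.
rewrite ifF; last by apply/eqP; lia.
rewrite (@bigmax_bin_le n.+1 _ M) // ?addKn //.
by rewrite binS; apply/andP; split; lia.
Qed.

Lemma mac_up0n h : mac_up 0 h = 0.
Proof. by rewrite /mac_up big_nil. Qed.

Lemma mac_upn0 n : mac_up n 0 = 0.
Proof. by rewrite /mac_up binrep0 big_nil. Qed.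

Lemma mac_up_split n M r : 0 < n -> n <= M -> r < 'C(M, n.-1) ->
  mac_up n ('C(M, n) + r) = 'C(M.+1, n) + mac_up n.-1 r.
Proof.
by move=> n0 leM ltr; rewrite /mac_up binrep_split // big_cons /= subnK // addn1.
Qed.

Definition subadditive (F : nat -> nat) := forall x y, F (x + y) <= F x + F y.

(* With b := a - k and c := x + k: F a + F x <= F b + F c whenever
   a + x = b + c and x <= b, c <= a. *)
Definition outer_le_inner (F : nat -> nat) (a : nat) :=
  forall x k, x + k <= a -> F a + F x <= F (x + k) + F (a - k).

(* The arguments of [F] are given by equations, for [lia] to discharge; the
   same goes for [F_tierE] and [tier_step_ineq_at] below. *)
Lemma outer_le_inner_at (F : nat -> nat) a x k y z :
  outer_le_inner F a -> x + k <= a -> y = x + k -> z = a - k ->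
  F a + F x <= F y + F z.
Proof. by move=> Ta lexk -> ->; exact: Ta. Qed.

Definition tier_regular (F A : nat -> nat) :=
  [/\ {homo F : x y / x <= y}, subadditive F & forall i, outer_le_inner F (A i)].

Section TierExtension.

Variables F F' A A' : nat -> nat.
Hypothesis F'_mono : {homo F' : x y / x <= y}.
Hypothesis F'_subadd : subadditive F'.
Hypothesis F'_outer : forall i, outer_le_inner F' (A' i).
Hypothesis A'_mono : {homo A' : i j / i <= j}.
Hypothesis A'_gt0 : forall i, 0 < A' i.+1.
Hypothesis A0 : A 0 = 0.
Hypothesis AS : forall i, A i.+1 = A i + A' i.+1.
Hypothesis F0 : F 0 = 0.
Hypothesis F_tier : forall i r, r <= A' i.+1 -> F (A i + r) = F (A i) + F' r.

Lemma F_tierE i r y : y = A i + r -> r <= A' i.+1 -> F y = F (A i) + F' r.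
Proof. by move=> ->; exact: F_tier. Qed.

Lemma A_mono : {homo A : i j / i < j}.
Proof. by apply: homo_ltn ltn_trans _ => i; rewrite AS -addn1 leq_add2l. Qed.

Lemma A_ltS_le i j : A i < A j.+1 -> i <= j.
Proof.
move=> lt_ij; rewrite leqNgt; apply/negP => /(ltnW_homo A_mono).
by rewrite leqNgt lt_ij.
Qed.

Lemma tier_decomp y : exists i r, y = A i + r /\ r < A' i.+1.
Proof.
elim: y => [|y [i [r [-> ltr]]]]; first by exists 0, 0; rewrite A0 A'_gt0.
case: (ltnP r.+1 (A' i.+1)) => [ltr1|ger1]; first by exists i, r.+1; rewrite addnS.
by exists i.+1, 0; rewrite AS A'_gt0; split; lia.
Qed.

Lemma F_mono : {homo F : x y / x <= y}.
Proof.
apply: homo_leq leqnn leq_trans _ => y; have [i [r [-> ltr]]] := tier_decomp y.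
by rewrite -addnS !F_tier ?leq_add2l ?F'_mono // ltnW.
Qed.

(* Crossing into the next tier is paid for by [F'_outer]. *)
Lemma F_shift_le j q o : q < A' j.+1 -> o <= A' j.+1 ->
  F (A j + q + o) <= F (A j + q) + F' o.
Proof.
move=> ltq leo; have le_next := A'_mono (leqnSn j.+1).
have Eq := F_tierE (erefl (A j + q)) (ltnW ltq).
case: (leqP (q + o) (A' j.+1)) => [leqo|gtqo].
  by rewrite -addnA F_tier // Eq -addnA leq_add2l F'_subadd.
have Enext := F_tierE (y := A j + q + o) (r := q + o - A' j.+1) (i := j.+1)
  ltac:(rewrite AS; lia) ltac:(lia).
have Etop := F_tierE (AS j) (leqnn _).
have := outer_le_inner_at (x := q + o - A' j.+1) (k := A' j.+1 - q) (y := o) (z := q)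
  (@F'_outer j.+1) ltac:(lia) ltac:(lia) ltac:(lia).
lia.
Qed.

Lemma F_tier_submod i o R : o <= A' i.+1 ->
  F (A i + o + R) + F (A i) <= F (A i + o) + F (A i + R).
Proof.
move=> leo; have [j [q [EAR ltq]]] := tier_decomp (A i + R).
have le_ij : i <= j by apply: A_ltS_le; rewrite AS; lia.
have := F_shift_le ltq (leq_trans leo (A'_mono (le_ij : i.+1 <= j.+1))).
rewrite -EAR (F_tier leo) addnAC; lia.
Qed.

Lemma F_tier_subadd i R : F (A i + R) <= F (A i) + F R.
Proof.
elim: i R => [|i IH] R; first by rewrite A0 F0.
have := F_tier_submod R (leqnn (A' i.+1)); rewrite -AS.
have := IH R; lia.
Qed.

Lemma F_subadd : subadditive F.
Proof.
move=> x k; have [i [o [-> lto]]] := tier_decomp x.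
have := F_tier_submod k (ltnW lto); have := F_tier_subadd i k; lia.
Qed.

(* The case x + k = A i of [outer_le_inner F (A i.+1)]; it has to be carried
   along the induction on i, as the step to A i.+1 relies on it. *)
Definition tier_step_ineq i := forall k, k <= A i ->
  F (A i.+1) + F (A i - k) <= F (A i) + F (A i.+1 - k).

Lemma tier_step_ineq_at i k y z : tier_step_ineq i -> k <= A i ->
  y = A i - k -> z = A i.+1 - k -> F (A i.+1) + F y <= F (A i) + F z.
Proof. by move=> Li lek -> ->; exact: Li. Qed.

Lemma F_outer_succ i : outer_le_inner F (A i) -> tier_step_ineq i ->
  outer_le_inner F (A i.+1).
Proof.
move=> Ti Li x k lexk; have ASi := AS i; have le_next := A'_mono (leqnSn i.+1).
have Etop := F_tierE ASi (leqnn _).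
case: (leqP (x + k) (A i)) => [le_xk_a|gt_xk_a].
  have := Ti x k le_xk_a; have := Li k ltac:(lia); lia.
case: (leqP (A i) x) => [le_a_x|lt_x_a].
  have E1 := F_tierE (i := i) (r := x - A i) (y := x) ltac:(lia) ltac:(lia).
  have E2 := F_tierE (i := i) (r := x - A i + k) (y := x + k) ltac:(lia) ltac:(lia).
  have E3 := F_tierE (i := i) (r := A' i.+1 - k) (y := A i.+1 - k) ltac:(lia) ltac:(lia).
  have := outer_le_inner_at (x := x - A i) (k := k) (@F'_outer i.+1)
    ltac:(lia) erefl erefl.
  lia.
have E2 := F_tierE (i := i) (r := x + k - A i) (y := x + k) ltac:(lia) ltac:(lia).
case: (leqP k (A' i.+1)) => [le_k_d|gt_k_d].
  have E3 := F_tierE (i := i) (r := A' i.+1 - k) (y := A i.+1 - k) ltac:(lia) ltac:(lia).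
  have E4 := F_tierE (i := i) (r := A' i.+1 - (A i - x)) (y := A i.+1 - (A i - x))
    ltac:(lia) ltac:(lia).
  have := tier_step_ineq_at (k := A i - x) (y := x) Li ltac:(lia) ltac:(lia) erefl.
  have := F'_subadd (A' i.+1 - k) (x + k - A i).
  have -> : A' i.+1 - k + (x + k - A i) = A' i.+1 - (A i - x) by lia.
  lia.
move Em: (A' i.+1 - (x + k - A i)) => m.
have := tier_step_ineq_at (k := m) (y := A i - m) (z := x + k) Li
  ltac:(lia) erefl ltac:(lia).
have := outer_le_inner_at (x := x) (k := m) (y := A i.+1 - k) (z := A i - m) Ti
  ltac:(lia) ltac:(lia) erefl.
lia.
Qed.

Lemma tier_step_ineq_succ i : outer_le_inner F (A i) -> tier_step_ineq i ->
  tier_step_ineq i.+1.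
Proof.
move=> Ti Li k; elim/ltn_ind: k => k IHk lek.
have ASi := AS i; have ASi1 := AS i.+1; have le_next := A'_mono (leqnSn i.+1).
have Etop := F_tierE ASi (leqnn _); have Etop1 := F_tierE ASi1 (leqnn _).
have d_gt0 := A'_gt0 i; have e_gt0 := A'_gt0 i.+1.
have E2 := F_tierE (i := i.+1) (r := A' i.+2 - k) (y := A i.+2 - k).
case: (leqP k (A' i.+1)) => [le_k_d|gt_k_d].
  have E1 := F_tierE (i := i) (r := A' i.+1 - k) (y := A i.+1 - k) ltac:(lia) ltac:(lia).
  have := outer_le_inner_at (x := A' i.+1 - k) (k := k) (y := A' i.+1) (@F'_outer i.+2)
    ltac:(lia) ltac:(lia) erefl.
  have := E2 ltac:(lia) ltac:(lia); lia.
case: (leqP k (A' i.+2)) => [le_k_e|gt_k_e].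
  move Ek': (k - A' i.+1) => k'.
  have E3 := F_tierE (i := i.+1) (r := A' i.+2 - k') (y := A i.+2 - k')
    ltac:(lia) ltac:(lia).
  have := IHk k' ltac:(lia) ltac:(lia).
  have := tier_step_ineq_at (k := k') (y := A i.+1 - k) Li ltac:(lia) ltac:(lia) erefl.
  have := F'_subadd (A' i.+2 - k) (A' i.+1).
  have -> : A' i.+2 - k + A' i.+1 = A' i.+2 - k' by lia.
  have := E2 ltac:(lia) ltac:(lia); lia.
move Em: (k - A' i.+2) => m; move Et: (A' i.+2 - A' i.+1) => t.
have := tier_step_ineq_at (k := m) (z := A i.+2 - k) Li ltac:(lia) erefl ltac:(lia).
have := outer_le_inner_at (x := A i.+1 - k) (k := t) (y := A i - m) (z := A i - t) Ti
  ltac:(lia) ltac:(lia) erefl.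
have := IHk t ltac:(lia) ltac:(lia).
have := F_tierE (i := i.+1) (r := A' i.+1) (y := A i.+2 - t) ltac:(lia) ltac:(lia).
have := tier_step_ineq_at (k := t) (y := A i - t) (z := A i.+1 - t) Li
  ltac:(lia) erefl erefl.
lia.
Qed.

Lemma F_outer i : outer_le_inner F (A i).
Proof.
suff [] : outer_le_inner F (A i) /\ tier_step_ineq i by [].
elim: i => [|i [Ti Li]].
  rewrite /outer_le_inner /tier_step_ineq A0; split=> [x k|k] le0.
    by have [-> ->] : x = 0 /\ k = 0 by lia.
  have -> : k = 0 by lia.
  by rewrite !subn0 addnC.
by split; [exact: F_outer_succ | exact: tier_step_ineq_succ].
Qed.

Lemma tier_regular_extension : tier_regular F A.
Proof. by split; [exact: F_mono | exact: F_subadd | exact: F_outer]. Qed.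

End TierExtension.

Definition mac_layer n s h := \sum_(p <- binrep n h)
  (if s <= p.1 then 'C(p.2 + p.1 - s, p.1 - s) else 0).

(* For 0 < n, the h in [tier n i, tier n i.+1) are those whose binomial
   representation starts with 'C(i + n.-1, n). *)
Definition tier n i := 'C(i + n.-1, n).

Lemma mac_layer0 n s : mac_layer n s 0 = 0.
Proof. by rewrite /mac_layer binrep0 big_nil. Qed.

Lemma mac_layer_split n s M r : 0 < n -> n <= M -> r < 'C(M, n.-1) ->
  mac_layer n s ('C(M, n) + r) =
  (if s <= n then 'C(M - s, n - s) else 0) + mac_layer n.-1 s r.
Proof. by move=> n0 leM ltr; rewrite /mac_layer binrep_split // big_cons /= subnK. Qed.

Lemma mac_layer_bin n s M : 0 < n -> n <= M ->
  mac_layer n s 'C(M, n) = if s <= n then 'C(M - s, n - s) else 0.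
Proof.
move=> n0 leM; have ltC : 0 < 'C(M, n.-1) by rewrite bin_gt0; lia.
by have := mac_layer_split s n0 leM ltC; rewrite !addn0 mac_layer0 addn0.
Qed.

Lemma mac_layer_eq0 n s h : n < s -> mac_layer n s h = 0.
Proof.
elim: n h => [|n IH] h lt_ns; first by rewrite /mac_layer big_nil.
have [->|h0] := posnP h; first exact: mac_layer0.
have [M [r [leM ltr ->]]] := bin_split (ltn0Sn n) h0.
by rewrite mac_layer_split // IH ?ifN //; lia.
Qed.

Lemma mac_layer1 n s : 0 < s -> s <= n -> mac_layer n s 1 = 1.
Proof.
move=> s0 le_sn; have n0 : 0 < n by lia.
by have := mac_layer_bin s n0 (leqnn n); rewrite binn le_sn binn.
Qed.

Lemma mac_layer_diag s h : 0 < s -> mac_layer s s h = minn h 1.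
Proof.
move=> s0; have [->|h0] := posnP h; first by rewrite mac_layer0.
have [M [r [leM ltr ->]]] := bin_split s0 h0.
rewrite mac_layer_split // leqnn subnn bin0 mac_layer_eq0; last lia.
have : 0 < 'C(M, s) by rewrite bin_gt0.
lia.
Qed.

Lemma tier_regular_diag s : 0 < s -> tier_regular (mac_layer s s) (tier s).
Proof. by move=> s0; split=> [x y|x y|i x k]; rewrite !mac_layer_diag //; lia. Qed.

Lemma mac_layer_tierD k s i r : 0 < s -> s <= k -> r <= tier k i.+1 ->
  mac_layer k.+1 s (tier k.+1 i + r) = mac_layer k.+1 s (tier k.+1 i) + mac_layer k s r.
Proof.
rewrite /tier /= => s0 le_sk; have k0 : 0 < k by lia.
have -> : i.+1 + k.-1 = i + k by lia.
have [->|i0] := posnP i => ler.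
  rewrite add0n bin_small // mac_layer0 add0n.
  rewrite add0n binn in ler.
  have [->|r0] := posnP r; first by rewrite !mac_layer0.
  have -> : r = 1 by lia.
  by rewrite !mac_layer1 //; lia.
have leM : k.+1 <= i + k by lia.
rewrite mac_layer_bin //.
case: (ltnP r 'C(i + k, k)) => [ltr|ger]; first by rewrite mac_layer_split.
have -> : r = 'C(i + k, k) by lia.
rewrite -binS !mac_layer_bin ?leq_addl //; last lia.
rewrite le_sk ltnW // subSn; last lia.
by rewrite subSn // binS.
Qed.

Lemma tier_regular_succ k s : 0 < s -> s <= k ->
  tier_regular (mac_layer k s) (tier k) -> tier_regular (mac_layer k.+1 s) (tier k.+1).
Proof.
move=> s0 le_sk [mono subadd outer]; have k0 : 0 < k by lia.
apply: tier_regular_extension mono subadd outer _ _ _ _ (mac_layer0 _ _) _.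
- by move=> i j le_ij; apply: leq_bin2l; rewrite leq_add2r.
- by move=> i; rewrite bin_gt0; lia.
- by rewrite /tier bin_small.
- by move=> i; rewrite /tier /= addSn binS addSnnS prednK // addnC.
- by move=> i r; exact: mac_layer_tierD.
Qed.

Lemma tier_regular_mac_layer n s : 0 < s -> s <= n ->
  tier_regular (mac_layer n s) (tier n).
Proof.
move=> s0 /subnK <-; elim: (n - s) => [|d IH]; first exact: tier_regular_diag.
by rewrite addSn; apply: tier_regular_succ => //; rewrite leq_addl.
Qed.

Lemma mac_layer_outer n s alpha : 0 < s -> s <= n ->
  outer_le_inner (mac_layer n s) 'C(alpha + n, n).
Proof.
move=> s0 le_sn; have [_ _ outer] := tier_regular_mac_layer s0 le_sn.
by have := outer alpha.+1; rewrite /tier addSnnS prednK //; lia.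
Qed.

Lemma binS_sum n M : n <= M ->
  'C(M.+1, n) = 'C(M, n) + \sum_(s < n) 'C(M - s.+1, n - s.+1).
Proof.
elim: n M => [|n IH] M le_nM; first by rewrite big_ord0 !bin0.
case: M le_nM => // M le_nM.
rewrite binS (IH M) // big_ord_recl /=.
by congr (_ + (_ + _)); rewrite !subn1.
Qed.

Lemma binSS_sum n M : n <= M ->
  'C(M.+2, n) = 'C(M.+1, n) + \sum_(s < n) s.+1 * 'C(M - s.+1, n - s.+1).
Proof.
elim: n M => [|n IH] M le_nM; first by rewrite big_ord0 !bin0.
case: M le_nM => // M; rewrite ltnS => le_nM.
rewrite [LHS]binS (IH M) // (binS_sum le_nM) big_ord_recl -[nat_of_ord ord0]/0.
rewrite mul1n !subSS !subn0 -addnA -big_split.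
by congr (_ + (_ + _)).
Qed.

Lemma mac_up_ltn_bin n h M : h < 'C(M, n) -> mac_up n h < 'C(M.+1, n).
Proof.
elim: n h M => [|n IH] h M lthC; first by rewrite mac_up0n bin0.
have [h0|h_gt0] := posnP h.
  by move: lthC; rewrite h0 mac_upn0 !bin_gt0; lia.
have [M' [r [leM' /= ltr Eh]]] := bin_split (ltn0Sn n) h_gt0; subst h.
have ltM' : M' < M.
  by rewrite ltnNge; apply/negP => /(leq_bin2l n.+1); lia.
rewrite mac_up_split //=.
have := IH r M' ltr; have := leq_bin2l n.+1 (ltM' : M'.+2 <= M.+1).
rewrite binS; lia.
Qed.

Lemma sum_mac_layer_split n M r : n < M -> r < 'C(M, n) ->
  \sum_(s < n.+1) mac_layer n.+1 s.+1 ('C(M, n.+1) + r) =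
  \sum_(s < n.+1) 'C(M - s.+1, n.+1 - s.+1) + \sum_(s < n) mac_layer n s.+1 r.
Proof.
move=> ltM ltr; under eq_bigr => s _ do rewrite mac_layer_split // ltn_ord.
by rewrite big_split; congr (_ + _); rewrite big_ord_recr /= mac_layer_eq0 // addn0.
Qed.

Lemma sum_weighted_mac_layer_split n M r : n < M -> r < 'C(M, n) ->
  \sum_(s < n.+1) s.+1 * mac_layer n.+1 s.+1 ('C(M, n.+1) + r) =
  \sum_(s < n.+1) s.+1 * 'C(M - s.+1, n.+1 - s.+1) +
  \sum_(s < n) s.+1 * mac_layer n s.+1 r.
Proof.
move=> ltM ltr; under eq_bigr => s _ do rewrite mac_layer_split // ltn_ord mulnDr.
rewrite big_split; congr (_ + _).
by rewrite big_ord_recr /= mac_layer_eq0 // muln0 addn0.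
Qed.

Lemma mac_upE n h : 0 < n \/ h = 0 -> mac_up n h = h + \sum_(s < n) mac_layer n s.+1 h.
Proof.
elim: n h => [|n IH] h n0_or_h0.
  by case: n0_or_h0 => // ->; rewrite mac_up0n big_ord0.
have [->|h0] := posnP h; first by rewrite mac_upn0 big1 // => s _; rewrite mac_layer0.
have [M [r [leM /= ltr ->]]] := bin_split (ltn0Sn n) h0.
have n0_or_r0 : 0 < n \/ r = 0.
  by case: (posnP n) => [n0|]; [rewrite n0 bin0 in ltr; lia | left].
rewrite mac_up_split //= IH // sum_mac_layer_split // (binS_sum leM); lia.
Qed.

Lemma mac_up2E n h : 0 < n \/ h = 0 ->
  mac_up n (mac_up n h) = mac_up n h + \sum_(s < n) s.+1 * mac_layer n s.+1 h.
Proof.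
elim: n h => [|n IH] h n0_or_h0; first by rewrite !mac_up0n big_ord0.
have [->|h0] := posnP h.
  by rewrite !mac_upn0 big1 // => s _; rewrite mac_layer0 muln0.
have [M [r [leM /= ltr ->]]] := bin_split (ltn0Sn n) h0.
have n0_or_r0 : 0 < n \/ r = 0.
  by case: (posnP n) => [n0|]; [rewrite n0 bin0 in ltr; lia | left].
rewrite mac_up_split //= mac_up_split ?(mac_up_ltn_bin ltr) //=; last lia.
rewrite IH // sum_weighted_mac_layer_split // (binSS_sum leM); lia.
Qed.

Theorem lemma1p6 (n a b c alpha : nat) :
  0 < n -> 0 < a -> 0 < b -> 0 < c -> 0 < alpha ->
  'C(alpha + n, n) + a = b + c ->
  a < 'C(alpha + n, n) -> b < 'C(alpha + n, n) -> c < 'C(alpha + n, n) ->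
  mac_up n 'C(alpha + n, n) + mac_up n a <= mac_up n b + mac_up n c /\
  (mac_up n 'C(alpha + n, n) + mac_up n a = mac_up n b + mac_up n c ->
   mac_up n (mac_up n 'C(alpha + n, n)) + mac_up n (mac_up n a)
   = mac_up n (mac_up n b) + mac_up n (mac_up n c)).
Proof.
move=> n_gt0 _ _ _ _ sum_abc _ ltbN ltcN.
have layer_le (s : 'I_n) : mac_layer n s.+1 'C(alpha + n, n) + mac_layer n s.+1 a <=
                           mac_layer n s.+1 b + mac_layer n s.+1 c.
  have outer := mac_layer_outer (alpha := alpha) (ltn0Sn s) (ltn_ord s).
  by apply: (outer_le_inner_at (k := b - a) outer); lia.
have [_ sum_eqE] := leqif_sum (fun s (_ : true) => leqif_eq (layer_le s)).
split=> [|eq_up].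
  rewrite !mac_upE; [|by left ..].
  rewrite addnACA [b + _ + _]addnACA sum_abc leq_add2l -!big_split.
  by apply: leq_sum => s _; exact: layer_le.
rewrite !mac_up2E; [|by left ..].
rewrite addnACA [mac_up n b + _ + _]addnACA eq_up -!big_split; congr (_ + _).
move: eq_up; rewrite !mac_upE; [|by left ..].
rewrite addnACA [b + _ + _]addnACA sum_abc => /addnI.
rewrite -!big_split => /eqP; rewrite sum_eqE => /forallP layer_eq.
by apply: eq_bigr => s _ /=; rewrite -!mulnDr (eqP (layer_eq s)).
Qed.
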